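(* Consider one step of a delegated variational quantum algorithm (DVQA) in which a gradient approximation $g(\theta)=(g_1(\theta),\dots,g_{N_P}(\theta))$ of $\nabla f$ is computed via the Parameter Shift Rule, where $f(\theta)=\mathrm{Tr}[O\,U(\theta)\rho_{in}U^\dagger(\theta)]$ and $O=\sum_{i=1}^{N_o} c_iP_i$ is a global observable written as a real linear combination of local Pauli operators $P_i$. Each cost-function evaluation uses $N_s$ measurement shots (computation rounds). Let $\hat g(\theta)$ be the gradient obtained when $\delta$ of the computation rounds of the step are corrupted, let $e=\frac{\|g(\theta)-\hat g(\theta)\|}{\|g(\theta)\|}$ be the relative error of the gradient, and let $\epsilon_0>0$ be a lower bound on $\|g(\theta)\|$. Then $$e\le \frac{\sum_i |c_i|}{\epsilon_0 N_s}\,\delta .$$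
   Context: Parameter Shift Rule: for each parameter $\theta_j$ (with $N_P$ parameters in total), $g_j(\theta)=\frac12\big(f_{+}-f_{-}\big)$ where $f_{\pm}$ is $f$ evaluated with $\theta_j$ shifted by $\pm\pi/2$; hence one step requires $2N_P$ function evaluations and $2N_PN_s$ shots (computation rounds) in total. Each cost-function evaluation is estimated from the sample average of measured Pauli eigenvalues (each in $\{\pm1\}$) weighted by the coefficients $c_i$. A computation round is corrupted if the eigenvalue it returns is replaced by an arbitrary (adversarial) eigenvalue. The norm $\|\cdot\|$ denotes the $\ell_1$ norm $\|v\|=\sum_j |v_j|$. $\delta$ is the total number of corrupted computation rounds over all $2N_P$ function evaluations of the step. *)

From HB Require Import structures.
From mathcomp Require Import all_boot all_order all_algebra.
Set Implicit Arguments. Unset Strict Implicit. Unset Printing Implicit Defensive.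
Import Order.TTheory GRing.Theory Num.Theory.
Local Open Scope ring_scope.

(* A computation round is indexed by (j, s, k) : 'I_NP * bool * 'I_Ns :
   parameter j, shift sign s (true = +pi/2, false = -pi/2), shot k.
   Each round returns the measured Pauli eigenvalues  m (j,s,k) i  for i : 'I_NO. *)
Definition round (NP Ns : nat) := ('I_NP * bool * 'I_Ns)%type.

Definition outcomes (R : Type) (NP Ns NO : nat) := round NP Ns -> 'I_NO -> R.

Definition pm1_valued (R : numDomainType) NP Ns NO (m : outcomes R NP Ns NO) : Prop :=
  forall r i, m r i = 1 \/ m r i = -1.

(* estimate of f(theta with theta_j shifted by s*pi/2):
   sum_i c_i * (sample average over N_s shots of the eigenvalue of P_i) *)
Definition f_est (R : numFieldType) NP Ns NO (c : 'I_NO -> R)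
    (m : outcomes R NP Ns NO) (j : 'I_NP) (s : bool) : R :=
  \sum_(i < NO) c i * ((Ns%:R)^-1 * \sum_(k < Ns) m (j, s, k) i).

Definition psr_grad (R : numFieldType) NP Ns NO (c : 'I_NO -> R)
    (m : outcomes R NP Ns NO) (j : 'I_NP) : R :=
  (f_est c m j true - f_est c m j false) / 2.

Definition l1norm (R : numDomainType) n (v : 'I_n -> R) : R := \sum_(j < n) `|v j|.

From mathcomp Require Import all_boot all_order all_algebra.
From mathcomp Require Import ring.
Set Implicit Arguments. Unset Strict Implicit. Unset Printing Implicit Defensive.
Import Order.TTheory GRing.Theory Num.Theory.
Local Open Scope ring_scope.

(* Both estimates are linear in the outcomes, so the gradient error is the PSR
   gradient of the outcome difference.  A corrupted round replaces a +1/-1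
   eigenvalue by another one, a change of at most 2, and an honest round
   changes nothing; so the error of each shifted cost estimate is at most
   (sum_i |c_i|) * 2 / N_s per corrupted round of that estimate.  The factor
   1/2 of the PSR cancels the 2, and summing over all parameters and shifts
   counts every corrupted round once: the l1 error is at most
   (sum_i |c_i|) / N_s * delta. *)

Lemma sum_round (V : nmodType) (NP Ns : nat) (F : round NP Ns -> V) :
  \sum_(r : round NP Ns) F r = \sum_(j < NP) \sum_(s : bool) \sum_(k < Ns) F (j, s, k).
Proof.
transitivity (\sum_(p : 'I_NP * bool) \sum_(k < Ns) F (p, k)).
  by rewrite pair_bigA; apply: eq_bigr => -[].
by rewrite [RHS]pair_bigA; apply: eq_bigr => -[].
Qed.

Lemma sum_indicator_card (R : pzSemiRingType) (T : finType) (C : {set T}) :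
  \sum_(t : T) ((t \in C)%:R : R) = #|C|%:R.
Proof.
rewrite -sum1_card natr_sum [RHS]big_mkcond.
by apply: eq_bigr => t _; case: (t \in C).
Qed.

Lemma normB_pm1_corrupted_le (R : numDomainType) (NP Ns NO : nat)
    (m mh : outcomes R NP Ns NO) (C : {set round NP Ns}) :
  pm1_valued m -> pm1_valued mh -> (forall r, r \notin C -> mh r = m r) ->
  forall r i, `|m r i - mh r i| <= 2 * (r \in C)%:R.
Proof.
move=> hm hmh hC r i.
have [_ | /hC ->] := boolP (r \in C); last by rewrite subrr normr0 mulr0.
rewrite mulr1; apply: le_trans (ler_normB _ _) _.
by have [->|->] := hm r i; have [->|->] := hmh r i; rewrite ?normrN normr1.
Qed.

Section PsrGradientBounds.

Variables (R : numFieldType) (NP Ns NO : nat) (c : 'I_NO -> R).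
Implicit Types m mh : outcomes R NP Ns NO.

Lemma f_estB m mh j s :
  f_est c m j s - f_est c mh j s = f_est c (fun r i => m r i - mh r i) j s.
Proof.
rewrite /f_est -sumrB; apply: eq_bigr => i _.
by rewrite sumrB !mulrBr.
Qed.

Lemma psr_gradB m mh j :
  psr_grad c m j - psr_grad c mh j = psr_grad c (fun r i => m r i - mh r i) j.
Proof. by rewrite /psr_grad -!f_estB; ring. Qed.

Variables (d : outcomes R NP Ns NO) (b : round NP Ns -> R).
Hypothesis d_le_b : forall r i, `|d r i| <= b r.

Lemma norm_f_est_le j s :
  `|f_est c d j s| <= (\sum_(i < NO) `|c i|) * (Ns%:R^-1 * \sum_(k < Ns) b (j, s, k)).
Proof.
rewrite /f_est mulr_suml; apply: le_trans (ler_norm_sum _ _ _) _.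
apply: ler_sum => i _; rewrite normrM.
apply: ler_wpM2l => //; rewrite normrM ger0_norm ?invr_ge0 //.
apply: ler_wpM2l; first by rewrite invr_ge0.
by apply: le_trans (ler_norm_sum _ _ _) _; apply: ler_sum => k _.
Qed.

Lemma norm_psr_grad_le j :
  `|psr_grad c d j| <=
    (\sum_(i < NO) `|c i|) * (Ns%:R^-1 * \sum_(s : bool) \sum_(k < Ns) b (j, s, k)) / 2.
Proof.
rewrite /psr_grad normrM [`|2^-1|]ger0_norm ?invr_ge0 //.
apply: ler_wpM2r; first by rewrite invr_ge0.
apply: le_trans (ler_normB _ _) _.
by rewrite big_bool /= mulrDr mulrDr; apply: lerD; apply: norm_f_est_le.
Qed.

Lemma l1norm_psr_grad_le :
  l1norm (psr_grad c d) <=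
    (\sum_(i < NO) `|c i|) * (Ns%:R^-1 * \sum_(r : round NP Ns) b r) / 2.
Proof.
rewrite sum_round !mulr_sumr mulr_suml.
by apply: ler_sum => j _; apply: norm_psr_grad_le.
Qed.

End PsrGradientBounds.

Lemma l1norm_psr_grad_corrupted_le (R : numFieldType) (NP Ns NO : nat)
    (c : 'I_NO -> R) (m mh : outcomes R NP Ns NO) (C : {set round NP Ns}) :
  pm1_valued m -> pm1_valued mh -> (forall r, r \notin C -> mh r = m r) ->
  l1norm (fun j => psr_grad c m j - psr_grad c mh j) <=
    (\sum_(i < NO) `|c i|) / Ns%:R * #|C|%:R.
Proof.
move=> hm hmh hC.
rewrite /l1norm; under eq_bigr do rewrite psr_gradB.
apply: le_trans (l1norm_psr_grad_le c (normB_pm1_corrupted_le hm hmh hC)) _.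
by rewrite -mulr_sumr sum_indicator_card [2 * _]mulrC !mulrA mulfK ?pnatr_eq0.
Qed.

Theorem lemma1 (R : realFieldType) (NP Ns NO : nat) (c : 'I_NO -> R)
    (m mh : round NP Ns -> 'I_NO -> R) (C : {set round NP Ns}) (eps0 : R) :
  (0 < Ns)%N ->
  pm1_valued m -> pm1_valued mh ->
  (forall r, r \notin C -> mh r = m r) ->
  0 < eps0 ->
  eps0 <= l1norm (psr_grad c m) ->
  l1norm (fun j => psr_grad c m j - psr_grad c mh j) / l1norm (psr_grad c m)
    <= (\sum_(i < NO) `|c i|) / (eps0 * Ns%:R) * (#|C|)%:R.
Proof.
move=> _ hm hmh hC eps0_gt0 eps0_le_g.
set err := l1norm (fun j => _).
have err_ge0 : 0 <= err by apply: sumr_ge0 => j _.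
have g_gt0 : 0 < l1norm (psr_grad c m) := lt_le_trans eps0_gt0 eps0_le_g.
apply: (@le_trans _ _ (err / eps0)).
  by apply: ler_wpM2l => //; rewrite lef_pV2.
have -> : (\sum_(i < NO) `|c i|) / (eps0 * Ns%:R) * #|C|%:R
        = (\sum_(i < NO) `|c i|) / Ns%:R * #|C|%:R / eps0 by rewrite invfM; ring.
apply: ler_wpM2r; first by rewrite invr_ge0 ltW.
exact: l1norm_psr_grad_corrupted_le.
Qed.
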